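(* Let $m,k\in\mathbb{N}$ and let $\gamma\in\mathbb{C}$ with $\gamma,\ 1-2m-\gamma\notin\mathbb{Z}_0^-$. Then \[ {}_3F_2\left[\begin{array}{r} -2m,\ 1+k,\ \gamma;\\ -2m-k,\ 1-2m-\gamma;\end{array}1\right]_{2m}=\frac{(1+k)_{m}(\gamma)_{m}2^{2m}\left(\frac{1}{2}\right)_m(1+k+\gamma)_{2m}}{(1+k)_{2m}(\gamma)_{2m}(1+k+\gamma)_{m}}. \]
   Context: $\mathbb{N}=\{1,2,3,\dots\}$, $\mathbb{Z}_0^-=\{0,-1,-2,\dots\}$. For $a\in\mathbb{C}$ and $n\in\mathbb{N}_0$, $(a)_0=1$ and $(a)_n=a(a+1)\cdots(a+n-1)$. For $N\in\mathbb{N}_0$, ${}_3F_2\left[\begin{array}{r} a_1,a_2,a_3;\\ b_1,b_2;\end{array}z\right]_N=\sum_{n=0}^{N}\frac{(a_1)_n(a_2)_n(a_3)_n}{(b_1)_n(b_2)_n}\frac{z^n}{n!}$ (the sum of the first $N+1$ terms), defined whenever $(b_1)_n(b_2)_n\neq0$ for $0\le n\le N$. *)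

From HB Require Import structures.
From mathcomp Require Import all_boot all_order all_algebra.
From mathcomp Require Import complex.
Set Implicit Arguments. Unset Strict Implicit. Unset Printing Implicit Defensive.
Import Order.TTheory GRing.Theory Num.Theory.
Local Open Scope ring_scope.

Definition poch {F : nzRingType} (a : F) (n : nat) : F :=
  \prod_(i < n) (a + i%:R).

Definition F32_trunc {F : fieldType} (a1 a2 a3 b1 b2 z : F) (N : nat) : F :=
  \sum_(n < N.+1)
    (poch a1 n * poch a2 n * poch a3 n) / (poch b1 n * poch b2 n)
      * z ^+ n / (n`!)%:R.

Definition notin_Z0neg {F : nzRingType} (z : F) : Prop :=
  forall n : nat, z <> - (n%:R).

(* The reflection (1 - N - a)_n = (-1)^n (a + N - n)_n turns the n-th term
   of the truncated series into (2m)!/((x)_2m (y)_2m) (-1)^n u(n) u(2m-n),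
   where x = 1+k, y = gamma and u(n) = (x)_n (y)_n / n!.  The alternating
   convolution T(N) = sum_n (-1)^n u(n) u(N-n) satisfies
   T(2m+2) = rho(m) T(2m) for an explicit rational rho, proved by a
   Zeilberger certificate, whence T(2m) = (x)_m (y)_m (x+y+m)_m / m!.
   Legendre's duplication (2m)! = 4^m (1/2)_m m! gives the stated form. *)

From HB Require Import structures.
From mathcomp Require Import all_boot all_order all_algebra.
From mathcomp Require Import complex.
From mathcomp Require Import reals.
From mathcomp Require Import ring zify.
Set Implicit Arguments.
Unset Strict Implicit.
Unset Printing Implicit Defensive.
Import GRing.Theory Num.Theory.
Local Open Scope ring_scope.

Section Pochhammer.
Variable R : nzRingType.
Implicit Types a : R.

Lemma poch0 a : poch a 0 = 1.
Proof. by rewrite /poch big_ord0. Qed.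

Lemma pochS a n : poch a n.+1 = poch a n * (a + n%:R).
Proof. by rewrite /poch big_ord_recr. Qed.

Lemma poch1 a : poch a 1 = a.
Proof. by rewrite pochS poch0 mul1r addr0. Qed.

Lemma poch_add a p n : poch a (p + n) = poch a p * poch (a + p%:R) n.
Proof.
elim: n => [|n IHn]; first by rewrite addn0 poch0 mulr1.
by rewrite addnS !pochS IHn natrD addrA mulrA.
Qed.

Lemma poch1n n : poch (1 : R) n = n`!%:R.
Proof.
elim: n => [|n IHn]; first by rewrite poch0 fact0.
by rewrite pochS IHn factS mulnC natrM nat1r.
Qed.

End Pochhammer.

Lemma poch_opp_rev (R : comNzRingType) (a : R) j n :
  poch (1 - (j + n)%:R - a) n = (-1) ^+ n * poch (a + j%:R) n.
Proof.
have -> : (-1) ^+ n = (-1) ^+ #|'I_n| :> R by rewrite card_ord.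
rewrite /poch -prodrN (reindex_inj rev_ord_inj) /=.
apply: eq_bigr => -[i lt_in] _; rewrite /= natrB ?natrD //.
by rewrite -natr1; ring.
Qed.

Lemma poch_neq0 (R : idomainType) (a : R) n :
  (forall i, a + i%:R != 0) -> poch a n != 0.
Proof. by move=> a_neq0; apply/prodf_neq0 => i _; apply: a_neq0. Qed.

Section NatCastNonzero.
Variable R : numDomainType.

Lemma natS_neq0 n : n.+1%:R != 0 :> R.
Proof. by rewrite pnatr_eq0. Qed.

Lemma fact_neq0 n : n`!%:R != 0 :> R.
Proof. by rewrite pnatr_eq0 -lt0n fact_gt0. Qed.

End NatCastNonzero.

Lemma exp2_poch_half (R : numFieldType) m :
  2 ^+ (2 * m) * poch (2^-1 : R) m = (2 * m)`!%:R / m`!%:R.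
Proof.
elim: m => [|m IHm]; first by rewrite muln0 expr0 poch0 fact0 mulr1 divr1.
have -> : (2 * m.+1 = (2 * m).+2)%N by lia.
rewrite !exprS pochS.
transitivity (4 * (2 ^+ (2 * m) * poch 2^-1 m) * (2^-1 + m%:R) : R); first by ring.
rewrite IHm !factS !natrM -!natr1 natrM.
by field; rewrite fact_neq0 natr1 natS_neq0.
Qed.

Section AlternatingConvolution.
Variable K : numFieldType.
Variables x y : K.

Definition hterm n : K := poch x n * poch y n / n`!%:R.

Definition altterm N n : K := (-1) ^+ n * hterm n * hterm (N - n).

Definition altconv N : K := \sum_(n < N.+1) altterm N n.

Lemma hterm0 : hterm 0 = 1.
Proof. by rewrite /hterm !poch0 fact0 mulr1 divr1. Qed.

Lemma htermS n : hterm n.+1 = hterm n * (x + n%:R) * (y + n%:R) / n.+1%:R.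
Proof.
rewrite /hterm !pochS factS natrM.
by field; rewrite nat1r natS_neq0 fact_neq0.
Qed.

(* Ratio and certificate found by Zeilberger's algorithm for the summand
   [altterm (2 * m) n], stepping [m] to [m + 1]. *)
Definition altconv_ratio (M : K) : K :=
  (x + M) * (y + M) * (x + y + 2 * M) * (x + y + 2 * M + 1)
  / ((M + 1) * (x + y + M)).

Definition altconv_cert_poly (M t : K) : K :=
  t ^+ 2 - (6 * M + 3 + 2 * (x + y)) * t
  + (2 + 3 * y + y ^+ 2 + 3 * x + 2 * x * y - x * y ^+ 2 + x ^+ 2 - x ^+ 2 * y
     + 11 * M + 9 * M * y + 9 * M * x - M * x * y + 18 * M ^+ 2
     + 4 * M ^+ 2 * y + 4 * M ^+ 2 * x + 8 * M ^+ 3) / (M + 1).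

Definition altconv_cert m n : K :=
  altterm (2 * m + 1) n * n%:R * altconv_cert_poly m%:R n%:R
  / (2 * (x + y + m%:R) * (2 * m + 2 - n)%:R).

Lemma altterm_telescope m n : (n <= 2 * m)%N -> x + y + m%:R != 0 ->
  altterm (2 * m).+2 n
  = altconv_ratio m%:R * altterm (2 * m) n
    + (altconv_cert m n.+1 - altconv_cert m n).
Proof.
move=> le_n2m xym_neq0; rewrite /altconv_cert /altterm.
set j := (2 * m - n)%N.
have -> : ((2 * m).+2 - n = j.+2)%N by rewrite /j; lia.
have -> : (2 * m + 1 - n.+1 = j)%N by rewrite /j; lia.
have -> : (2 * m + 2 - n.+1 = j.+1)%N by rewrite /j; lia.
have -> : (2 * m + 1 - n = j.+1)%N by rewrite /j; lia.
have -> : (2 * m + 2 - n = j.+2)%N by rewrite /j; lia.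
have jE : j%:R = 2 * m%:R - n%:R :> K by rewrite /j natrB ?natrM //; lia.
rewrite !htermS exprS -!natr1 jE /altconv_cert_poly /altconv_ratio.
by field; rewrite -jE !natr1 !natS_neq0 xym_neq0.
Qed.

Lemma altconv_double_step m : x + y + m%:R != 0 ->
  altconv (2 * m.+1) = altconv_ratio m%:R * altconv (2 * m).
Proof.
move=> xym_neq0; have -> : (2 * m.+1 = (2 * m).+2)%N by lia.
rewrite /altconv 2!big_ord_recr /=.
rewrite (eq_bigr _ (fun (i : 'I_(2 * m).+1) _ =>
  altterm_telescope (ltn_ord i) xym_neq0)) big_split /= -mulr_sumr.
rewrite -(big_mkord xpredT (fun i => altconv_cert m i.+1 - altconv_cert m i)).
rewrite telescope_sumr // -[RHS]addr0 -!addrA; congr (_ + _).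
have -> : altconv_cert m 0 = 0 by rewrite /altconv_cert !(mulr0, mul0r).
rewrite oppr0 add0r /altconv_cert /altterm.
have -> : (2 * m + 1 - (2 * m).+1 = 0)%N by lia.
have -> : (2 * m + 2 - (2 * m).+1 = 1)%N by lia.
rewrite subnn subSnn !htermS !hterm0 !exprS.
have -> : (-1) ^+ (2 * m) = 1 :> K by rewrite mulnC exprM sqrr_sign.
rewrite -!natr1 natrM /altconv_cert_poly.
by field; rewrite -natrM !natr1 !natS_neq0 xym_neq0.
Qed.

Lemma altconv_double m : (forall j, x + y + j%:R != 0) ->
  altconv (2 * m) = poch x m * poch y m * poch (x + y + m%:R) m / m`!%:R.
Proof.
move=> xy_neq0; elim: m => [|m IHm].
  by rewrite /altconv big_ord1 /altterm hterm0 expr0 !poch0 !mul1r fact0 invr1.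
rewrite altconv_double_step // IHm.
have shiftE : poch (x + y + m.+1%:R) m.+1
    = poch (x + y + m%:R) m * (x + y + m%:R + m%:R) * (x + y + m%:R + m.+1%:R)
      / (x + y + m%:R).
  rewrite -!pochS -[m.+2]/(1 + m.+1)%N poch_add poch1.
  by rewrite -[x + y + m%:R + 1]addrA natr1 mulrAC divff ?mul1r.
rewrite shiftE !pochS factS natrM /altconv_ratio -!natr1.
by field; rewrite fact_neq0 natr1 natS_neq0 xy_neq0.
Qed.

End AlternatingConvolution.

Lemma F32_trunc_altconv (K : numFieldType) (x y : K) N :
  (forall i, x + i%:R != 0) -> (forall i, y + i%:R != 0) ->
  F32_trunc (- N%:R) x y (1 - N%:R - x) (1 - N%:R - y) 1 N
  = N`!%:R / (poch x N * poch y N) * altconv x y N.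
Proof.
move=> x_neq0 y_neq0; rewrite /F32_trunc /altconv mulr_sumr.
apply: eq_bigr => -[n /=]; rewrite ltnS => le_nN _.
have [j ->] : exists j, N = (j + n)%N by exists (N - n)%N; rewrite subnK.
have shift_neq0 (a : K) :
    (forall i, a + i%:R != 0) -> forall i, a + j%:R + i%:R != 0.
  by move=> a_neq0 i; rewrite -addrA -natrD.
rewrite {1}(_ : - (j + n)%:R = 1 - (j + n)%:R - 1); last first.
  by rewrite addrAC subrr add0r.
rewrite !poch_opp_rev /altterm /hterm addnK -[(j + n)`!%:R]poch1n !poch_add.
rewrite poch1n expr1n [(_ ^+ n * _) * (_ ^+ n * _)]mulrACA -expr2 sqrr_sign mul1r.
by field; rewrite !fact_neq0 !(poch_neq0 _ x_neq0, poch_neq0 _ y_neq0)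
  !(poch_neq0 _ (shift_neq0 _ x_neq0), poch_neq0 _ (shift_neq0 _ y_neq0)).
Qed.

Local Open Scope complex_scope.

Theorem mainTheorem10 (R : realType) (m k : nat) (gamma : R[i])
  (hm : (0 < m)%N) (hk : (0 < k)%N)
  (hg : notin_Z0neg gamma)
  (hg' : notin_Z0neg (1 - (2 * m)%:R - gamma)) :
  F32_trunc (- (2 * m)%:R) (1 + k%:R) gamma
            (- (2 * m)%:R - k%:R) (1 - (2 * m)%:R - gamma) 1 (2 * m)
  = (poch (1 + k%:R) m * poch gamma m * 2 ^+ (2 * m) * poch (2^-1) m
       * poch (1 + k%:R + gamma) (2 * m))
    / (poch (1 + k%:R) (2 * m) * poch gamma (2 * m) * poch (1 + k%:R + gamma) m).
Proof.
set x : R[i] := 1 + k%:R.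
have x_neq0 i : x + i%:R != 0 by rewrite /x nat1r -natrD pnatr_eq0.
have g_neq0 i : gamma + i%:R != 0 by rewrite addr_eq0; apply/eqP/hg.
have xg_neq0 i : x + gamma + i%:R != 0.
  by rewrite (_ : _ + i%:R = gamma + (k.+1 + i)%:R) // /x natrD -nat1r; ring.
rewrite (_ : - (2 * m)%:R - k%:R = 1 - (2 * m)%:R - x); last by rewrite /x; ring.
rewrite F32_trunc_altconv // altconv_double //.
rewrite -(mulrA _ (2 ^+ _)) exp2_poch_half.
rewrite (_ : poch (x + gamma) (2 * m) = poch (x + gamma) m * poch (x + gamma + m%:R) m).
  by field; rewrite !fact_neq0
    !(poch_neq0 _ x_neq0, poch_neq0 _ g_neq0, poch_neq0 _ xg_neq0).
by rewrite -poch_add addnn mul2n.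
Qed.
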